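(* Every unary FA-presentable partial order $(X,\le)$ decomposes as a finite disjoint union of trivial partial orders, countably infinite ascending chains, countably infinite descending chains, and countably infinite anti-chains; that is, $X$ can be partitioned into finitely many subsets, each of which, with the induced order, is either a one-element partial order, or a countably infinite set $\{x_1,x_2,\dots\}$ with $x_i\le x_j$ iff $i\le j$, or one with $x_i\le x_j$ iff $i\ge j$, or a countably infinite anti-chain.
   Context: A structure $(X,\le)$ is unary FA-presentable if there exist a regular language $L\subseteq a^*$ over a one-letter alphabet and a surjection $\phi:L\to X$ such that $\{(u,v)\in L^2: u\phi=v\phi\}$ and $\{(u,v)\in L^2:u\phi\le v\phi\}$ are regular relations, i.e. the corresponding sets of words $\mathrm{conv}(u,v)$ over $\{a,\$\}^2$ (reading $u,v$ in parallel, padding the shorter with $\$$) are regular languages. *)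

From mathcomp Require Import all_boot.
Set Implicit Arguments. Unset Strict Implicit. Unset Printing Implicit Defensive.

Record dfa (A : finType) := DFA {
  dstate : finType;
  dstart : dstate;
  dtrans : dstate -> A -> dstate;
  dfinal : pred dstate }.

Definition dfa_accepts (A : finType) (M : dfa A) (w : seq A) : bool :=
  @dfinal A M (foldl (@dtrans A M) (@dstart A M) w).

Definition regular (A : finType) (P : seq A -> Prop) : Prop :=
  exists M : dfa A, forall w, P w <-> dfa_accepts M w.

(* Unary words a^n are identified with n; the one-letter alphabet is unit. *)
Definition unary_regular (L : nat -> Prop) : Prop :=
  regular (fun w : seq unit => L (size w)).

(* conv(a^m, a^n) over {a,$}^2: letter true = a, false = $ (padding). *)
Definition conv (m n : nat) : seq (bool * bool) :=
  mkseq (fun i => (i < m, i < n)) (maxn m n).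

Definition regular_rel (R : nat -> nat -> Prop) : Prop :=
  regular (fun w => exists m n, R m n /\ w = conv m n).

Definition partial_order (X : Type) (le : X -> X -> Prop) : Prop :=
  (forall x, le x x) /\
  (forall x y, le x y -> le y x -> x = y) /\
  (forall x y z, le x y -> le y z -> le x z).

Definition unary_FA_presentable (X : Type) (le : X -> X -> Prop) : Prop :=
  exists (L : nat -> Prop) (phi : nat -> X),
    unary_regular L /\
    (forall x, exists n, L n /\ phi n = x) /\
    regular_rel (fun m n => L m /\ L n /\ phi m = phi n) /\
    regular_rel (fun m n => L m /\ L n /\ le (phi m) (phi n)).

Definition trivial_block (X : Type) (B : X -> Prop) : Prop :=
  exists x, forall y, B y <-> y = x.

Definition enumerates (X : Type) (B : X -> Prop) (f : nat -> X) : Prop :=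
  injective f /\ (forall i, B (f i)) /\ (forall x, B x -> exists i, f i = x).

Definition ascending_chain_block (X : Type) (le : X -> X -> Prop) (B : X -> Prop) :=
  exists f, enumerates B f /\ forall i j, le (f i) (f j) <-> i <= j.

Definition descending_chain_block (X : Type) (le : X -> X -> Prop) (B : X -> Prop) :=
  exists f, enumerates B f /\ forall i j, le (f i) (f j) <-> j <= i.

Definition antichain_block (X : Type) (le : X -> X -> Prop) (B : X -> Prop) :=
  exists f, enumerates B f /\ forall i j, le (f i) (f j) <-> i = j.

From mathcomp Require Import all_boot zify boolp.

Set Implicit Arguments. Unset Strict Implicit. Unset Printing Implicit Defensive.

(* A DFA reading a^k is periodic after #|states| steps with a period dividing
   #|states|`!.  Hence, for K large enough and M = K`!, membership in L and the
   equality and order relations of the presentation are invariant under adding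
   M to both words once both are at least K, and under adding M to the longer
   word once the two differ by at least K.
   Represent every element by its least word.  Least words of length at least
   2K + M stay least after adding M, so the elements whose least word is shorter
   are finitely many singletons, and the others fall, by the residue of their
   least word mod M, into finitely many classes, each enumerated by an
   arithmetic progression n0 + jM.  Along such a progression the order between
   the i-th and j-th elements depends only on whether i < j, i = j or i > j,
   so each class is an ascending chain, a descending chain or an antichain. *)

Lemma iter_rho (S : finType) (f : S -> S) (s : S) :
  exists i p, [/\ 0 < p <= #|S|, i < #|S| & iter (i + p) f s = iter i f s].
Proof.
have /trajectP [i lt_i_ord iter_ord] := looping_order f s.
have ord_le : order f s <= #|S| by exact: max_card.
exists i, (order f s - i); split; [lia | lia |].
by rewrite subnKC ?(ltnW lt_i_ord).
Qed.

Lemma iter_periodic (S : finType) (f : S -> S) (s : S) (k M : nat) :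
  #|S| <= k -> #|S|`! %| M -> iter (k + M) f s = iter k f s.
Proof.
move=> le_Sk dvd_M.
have [i [p [/andP [p_gt0 le_pS] lt_iS iter_ip]]] := iter_rho f s.
have shift_p k' : i <= k' -> iter (k' + p) f s = iter k' f s.
  by move=> le_ik; rewrite -(subnK le_ik) -addnA iterD iter_ip -iterD.
have shift_cp c : iter (k + c * p) f s = iter k f s.
  elim: c => [|c IH]; first by rewrite addn0.
  by rewrite mulSnr addnA shift_p ?IH //; lia.
have dvd_pM : p %| M by apply: dvdn_trans dvd_M; apply: dvdn_fact; rewrite p_gt0.
by rewrite -(divnK dvd_pM) shift_cp.
Qed.

Lemma foldl_nseq (T A : Type) (f : T -> A -> T) (s : T) (k : nat) (a : A) :
  foldl f s (nseq k a) = iter k (f^~ a) s.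
Proof. by elim: k s => [|k IH] s //=; rewrite IH -iterSr. Qed.

Lemma conv_nseq m n : conv m n =
  nseq (minn m n) (true, true) ++ nseq (n - m) (false, true) ++ nseq (m - n) (true, false).
Proof.
apply: (@eq_from_nth _ (false, false)).
  by rewrite size_mkseq !size_cat !size_nseq; lia.
move=> i; rewrite size_mkseq => lt_i; rewrite nth_mkseq //.
rewrite !nth_cat !size_nseq.
case: (ltnP i (minn m n)) => [lt_i_min|le_min_i].
  by rewrite nth_nseq lt_i_min; congr pair; lia.
case: (ltnP (i - minn m n) (n - m)) => [lt_i_nm|le_nm_i]; rewrite nth_nseq.
  by rewrite lt_i_nm; congr pair; lia.
by case: ifP => lt_rest; [congr pair | exfalso]; lia.
Qed.

Lemma conv_inj m n m' n' : conv m n = conv m' n' -> m = m' /\ n = n'.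
Proof.
have count_conv a b : count fst (conv a b) = a /\ count snd (conv a b) = b.
  by rewrite conv_nseq !count_cat !count_nseq /=; lia.
move=> eq_conv; have [fst_mn snd_mn] := count_conv m n.
have [fst_mn' snd_mn'] := count_conv m' n'.
by split; [rewrite -fst_mn -fst_mn' eq_conv | rewrite -snd_mn -snd_mn' eq_conv].
Qed.

Lemma accepts_conv (D : dfa (bool * bool)%type) m n :
  dfa_accepts D (conv m n) = dfinal
    (iter (m - n) ((@dtrans _ D)^~ (true, false)) (iter (n - m) ((@dtrans _ D)^~ (false, true))
      (iter (minn m n) ((@dtrans _ D)^~ (true, true)) (dstart D)))).
Proof. by rewrite /dfa_accepts conv_nseq !foldl_cat !foldl_nseq. Qed.

Record shift_invariant (K M : nat) (P : nat -> nat -> Prop) : Prop := ShiftInvariant {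
  shift_both : forall m n, K <= m -> K <= n -> P m n <-> P (m + M) (n + M);
  shift_right : forall m n, m + K <= n -> P m n <-> P m (n + M);
  shift_left : forall m n, m + K <= n -> P n m <-> P (n + M) m }.

Lemma fact_dvdn m n : m <= n -> m`! %| n`!.
Proof. by move=> le_mn; rewrite (fact_split le_mn) dvdn_mulr. Qed.

Lemma regular_rel_shift_invariant (P : nat -> nat -> Prop) :
  regular_rel P -> exists N, forall K, N <= K -> shift_invariant K K`! P.
Proof.
move=> [D accD].
have P_acc m n : P m n <-> dfa_accepts D (conv m n).
  split=> [Pmn | /accD [m' [n' [Pmn' /conv_inj [-> ->]]]] //].
  by apply/accD; exists m, n.
exists #|dstate D| => K le_NK.
have periodic k a q :
    K <= k -> iter (k + K`!) ((@dtrans _ D)^~ a) q = iter k ((@dtrans _ D)^~ a) q.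
  by move=> le_Kk; apply: iter_periodic; [lia | apply: fact_dvdn].
split=> m n *; rewrite !P_acc !accepts_conv.
- by rewrite -addn_minl !subnDr periodic //; lia.
- have -> : minn m (n + K`!) = minn m n by lia.
  have -> : m - (n + K`!) = m - n by lia.
  have -> : n + K`! - m = (n - m) + K`! by lia.
  by rewrite periodic //; lia.
- have -> : minn (n + K`!) m = minn n m by lia.
  have -> : m - (n + K`!) = m - n by lia.
  have -> : n + K`! - m = (n - m) + K`! by lia.
  by rewrite periodic //; lia.
Qed.

Lemma unary_regular_periodic (L : nat -> Prop) :
  unary_regular L -> exists N, forall K n, N <= K -> K <= n -> L n <-> L (n + K`!).
Proof.
move=> [D accD].
have L_run k : L k <-> dfinal (iter k ((@dtrans _ D)^~ tt) (dstart D)).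
  by have := accD (nseq k tt); rewrite size_nseq /dfa_accepts foldl_nseq.
exists #|dstate D| => K n le_NK le_Kn.
by rewrite !L_run iter_periodic //; [lia | apply: fact_dvdn].
Qed.

Section ShiftInvariance.
Variables (K M : nat) (P : nat -> nat -> Prop).
Hypothesis P_shift : shift_invariant K M P.

Lemma shift_both_iter m n c : K <= m -> K <= n -> P (m + c * M) (n + c * M) <-> P m n.
Proof.
move=> le_Km le_Kn; elim: c => [|c IH]; first by rewrite !addn0.
by rewrite mulSnr !addnA -(shift_both P_shift) //; lia.
Qed.

Lemma shift_right_iter m n c : m + K <= n -> P m (n + c * M) <-> P m n.
Proof.
move=> le_mKn; elim: c => [|c IH]; first by rewrite !addn0.
by rewrite mulSnr addnA -(shift_right P_shift) //; lia.
Qed.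

Lemma shift_left_iter m n c : m + K <= n -> P (n + c * M) m <-> P n m.
Proof.
move=> le_mKn; elim: c => [|c IH]; first by rewrite !addn0.
by rewrite mulSnr addnA -(shift_left P_shift) //; lia.
Qed.

Lemma shift_invariant_progression n0 i j : K <= n0 -> K <= M -> i < j ->
  (P (n0 + i * M) (n0 + j * M) <-> P n0 (n0 + M)) /\
  (P (n0 + j * M) (n0 + i * M) <-> P (n0 + M) n0).
Proof.
move=> le_Kn0 le_KM lt_ij.
have [d ->] : exists d, j = i + d.+1 by exists (j - i).-1; lia.
have -> : n0 + (i + d.+1) * M = n0 + M + d * M + i * M by rewrite mulnDl mulSnr; lia.
rewrite !shift_both_iter //; try lia.
by rewrite shift_right_iter ?shift_left_iter //; lia.
Qed.

End ShiftInvariance.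

Lemma progression_block (X : Type) (le : X -> X -> Prop) (B : X -> Prop) (f : nat -> X)
    (up down : Prop) :
  partial_order le -> enumerates B f ->
  (forall i j, i < j -> le (f i) (f j) <-> up) ->
  (forall i j, i < j -> le (f j) (f i) <-> down) ->
  ascending_chain_block le B \/ descending_chain_block le B \/ antichain_block le B.
Proof.
move=> [le_refl [le_anti _]] enumB f_up f_down.
have not_up_down : ~ (up /\ down).
  move=> [/(f_up 0 1 erefl) le01 /(f_down 0 1 erefl) le10].
  by have /enumB.1 := le_anti _ _ le01 le10.
have le_f_iff (Q : nat -> nat -> Prop) :
    (forall i, Q i i) -> (forall i j, i < j -> (up <-> Q i j) /\ (down <-> Q j i)) ->
    forall i j, le (f i) (f j) <-> Q i j.
  move=> Q_refl Q_ij i j.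
  case: (ltngtP i j) => [lt_ij | lt_ji | <-]; last by split=> // _; apply: le_refl.
  - by rewrite f_up //; apply: (Q_ij _ _ lt_ij).1.
  - by rewrite f_down //; apply: (Q_ij _ _ lt_ji).2.
have [up_holds | not_up] := pselect up; have [down_holds | not_down] := pselect down.
- by case: not_up_down.
- left; exists f; split=> //; apply: le_f_iff => // i j lt_ij.
  by split; split=> //; lia.
- right; left; exists f; split=> //; apply: le_f_iff => // i j lt_ij.
  by split; split=> //; lia.
- right; right; exists f; split=> //; apply: le_f_iff => // i j lt_ij.
  by split; split=> //; lia.
Qed.

Lemma partition_by_bounded_fibers (X : Type) (f : X -> nat) (N : nat)
    (P : (X -> Prop) -> Prop) :
  (forall x, f x < N) -> (forall x, P (fun y => f y = f x)) ->
  exists (k : nat) (part : X -> 'I_k), forall i, P (fun y => part y = i).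
Proof.
move=> f_lt P_fiber.
pose U := [seq b <- iota 0 N | `[< exists x, f x = b >]].
have f_in_U x : f x \in U.
  by rewrite mem_filter mem_iota (f_lt x) !andbT; apply/asboolP; exists x.
have index_lt x : index (f x) U < size U by rewrite index_mem.
exists (size U), (fun x => Ordinal (index_lt x)) => i.
have : nth 0 U i \in U := mem_nth 0 (ltn_ord i).
rewrite mem_filter => /andP [/asboolP [x fx_eq] _].
suff -> : (fun y => Ordinal (index_lt y) = i) = (fun y => f y = f x) by [].
apply: funext => y; apply: propext; split.
- by move/(congr1 val) => /= idx_eq; rewrite fx_eq -idx_eq nth_index.
- move=> fy_eq; apply: val_inj => /=.
  by rewrite fy_eq fx_eq index_uniq ?filter_uniq ?iota_uniq.
Qed.

Section Decomposition.
Variables (X : Type) (le : X -> X -> Prop) (L : nat -> Prop) (phi : nat -> X) (K M : nat).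
Hypotheses (le_po : partial_order le) (phi_onto : forall x, exists n, L n /\ phi n = x).
Hypotheses (M_gt0 : 0 < M) (le_KM : K <= M).
Hypothesis L_periodic : forall n, K <= n -> L n <-> L (n + M).
Hypothesis eq_shift : shift_invariant K M (fun m n => L m /\ L n /\ phi m = phi n).
Hypothesis le_shift : shift_invariant K M (fun m n => L m /\ L n /\ le (phi m) (phi n)).

Local Notation threshold := (K + K + M).

Lemma repr_exists x : exists n, `[< L n /\ phi n = x >].
Proof. by have [n repr_n] := phi_onto x; exists n; apply/asboolP. Qed.

Definition least_repr x := ex_minn (repr_exists x).

Lemma least_reprP x : L (least_repr x) /\ phi (least_repr x) = x.
Proof. by rewrite /least_repr; case: ex_minnP => n /asboolP. Qed.

Lemma least_repr_min x n : L n -> phi n = x -> least_repr x <= n.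
Proof.
by move=> Ln phi_n; rewrite /least_repr; case: ex_minnP => m _; apply; apply/asboolP.
Qed.

Definition canonical_word n := L n /\ least_repr (phi n) = n.

Lemma canonical_least_repr x : canonical_word (least_repr x).
Proof. by have [L_x phi_x] := least_reprP x; split; rewrite ?phi_x. Qed.

Lemma canonical_word_inj m n :
  canonical_word m -> canonical_word n -> phi m = phi n -> m = n.
Proof. by move=> [_ least_m] [_ least_n] phi_mn; rewrite -least_m -least_n phi_mn. Qed.

Lemma canonical_word_shift n : threshold <= n -> canonical_word n -> canonical_word (n + M).
Proof.
move=> le_n [Ln least_n].
have LnM : L (n + M) by apply: (L_periodic _).1 => //; lia.
split=> //; have [Lm phi_m] := least_reprP (phi (n + M)).
have le_m := least_repr_min LnM erefl.
move: Lm phi_m le_m; set m := least_repr _ => Lm phi_m le_m.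
apply/eqP; rewrite eqn_leq le_m leqNgt /=; apply/negP => lt_m.
(* A shorter representative of phi (n + M) shifts back to one of phi n below n. *)
suff [m' [lt_m'n Lm' phi_m']] : exists m', [/\ m' < n, L m' & phi m' = phi n].
  by have := least_repr_min Lm' phi_m'; rewrite least_n; lia.
case: (leqP (K + M) m) => [le_KMm | lt_mKM].
- have [Lm' [_ phi_m']] : L (m - M) /\ L n /\ phi (m - M) = phi n.
    by apply/(shift_both eq_shift); rewrite ?subnK //; lia.
  by exists (m - M); split=> //; lia.
- have [_ [_ phi_mn]] : L m /\ L n /\ phi m = phi n.
    by apply/(shift_right eq_shift) => //; lia.
  by exists m; split=> //; lia.
Qed.

(* Short least words form singleton blocks; the others are grouped by their
   residue mod M, shifted past [threshold] to keep the two kinds apart. *)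
Definition block x :=
  if least_repr x < threshold then least_repr x else threshold + least_repr x %% M.

Lemma block_lt x : block x < threshold + M.
Proof. by rewrite /block; have := ltn_pmod (least_repr x) M_gt0; case: ifP; lia. Qed.

Lemma small_block x : least_repr x < threshold -> trivial_block (fun y => block y = block x).
Proof.
move=> small_x; exists x => y; split=> [|-> //].
have least_y : block y = block x -> least_repr y = least_repr x.
  by rewrite /block small_x; case: ifP => //; lia.
by move/least_y => eq_least; rewrite -(least_reprP y).2 eq_least (least_reprP x).2.
Qed.

Definition tail_word r n := [/\ threshold <= n, n %% M = r & canonical_word n].

Lemma block_tail x y : threshold <= least_repr x ->
  block y = block x <-> tail_word (least_repr x %% M) (least_repr y).
Proof.
move=> large_x; rewrite /block /tail_word [least_repr x < _]ltnNge large_x /=.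
have := canonical_least_repr y; case: ifP => small_y can_y.
  by split=> [|[]]; lia.
by split=> [eq_mod | [_ -> _]]; [split=> //; lia | ].
Qed.

Lemma tail_word_shift r n j : tail_word r n -> tail_word r (n + j * M).
Proof.
move=> tail_n; elim: j => [|j [le_n mod_n can_n]]; first by rewrite addn0.
rewrite mulSnr addnA; split; [lia | by rewrite modnDr | exact: canonical_word_shift].
Qed.

Lemma tail_word_progression r n0 n :
  tail_word r n0 -> (forall n, tail_word r n -> n0 <= n) -> tail_word r n ->
  exists j, n = n0 + j * M.
Proof.
move=> [_ mod_n0 _] n0_min tail_n; have le_n0n := n0_min n tail_n.
case: tail_n => _ mod_n _; exists ((n - n0) %/ M).
suff dvd : M %| n - n0 by rewrite divnK //; lia.
by rewrite -eqn_mod_dvd // mod_n mod_n0.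
Qed.

Lemma large_block x : threshold <= least_repr x ->
  let B := fun y => block y = block x in
  ascending_chain_block le B \/ descending_chain_block le B \/ antichain_block le B.
Proof.
move=> large_x B; set r := least_repr x %% M.
have tail_x : tail_word r (least_repr x).
  by split=> //; apply: canonical_least_repr.
have tail_exists : exists n, `[< tail_word r n >] by exists (least_repr x); apply/asboolP.
case: (ex_minnP tail_exists) => n0 /asboolP tail_n0 n0_min.
have {}n0_min n : tail_word r n -> n0 <= n by move=> tail_n; apply/n0_min/asboolP.
pose a j := n0 + j * M.
have tail_a j : tail_word r (a j) by apply: tail_word_shift.
have can_a j : canonical_word (a j) by case: (tail_a j).
have le_Kn0 : K <= n0 by case: tail_n0; lia.
have le_a i j :
    le (phi (a i)) (phi (a j)) <-> L (a i) /\ L (a j) /\ le (phi (a i)) (phi (a j)).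
  by split=> [le_ij | [_ [_ //]]]; split; [apply: (can_a i).1 | split; [apply: (can_a j).1 |]].
have order_a i j :=
  shift_invariant_progression le_shift (n0 := n0) (i := i) (j := j) le_Kn0 le_KM.
apply: (progression_block (f := phi \o a)
  (up := L n0 /\ L (n0 + M) /\ le (phi n0) (phi (n0 + M)))
  (down := L (n0 + M) /\ L n0 /\ le (phi (n0 + M)) (phi n0))) => //.
- split; [|split].
  + move=> i j /= /(canonical_word_inj (can_a i) (can_a j)).
    by rewrite /a => /eqP; rewrite eqn_add2l eqn_pmul2r // => /eqP.
  + by move=> j; apply/(block_tail _ large_x); rewrite /= (can_a j).2.
  + move=> y /(block_tail _ large_x) /(tail_word_progression tail_n0 n0_min) [j eq_y].
    by exists j; rewrite /= -(least_reprP y).2 eq_y.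
- by move=> i j lt_ij; rewrite /= le_a; apply: (order_a i j lt_ij).1.
- by move=> i j lt_ij; rewrite /= le_a; apply: (order_a i j lt_ij).2.
Qed.

Lemma periodic_presentation_decomposition : exists (k : nat) (part : X -> 'I_k),
  forall i : 'I_k,
    let B := fun x => part x = i in
    trivial_block B \/ ascending_chain_block le B \/
    descending_chain_block le B \/ antichain_block le B.
Proof.
apply: (partition_by_bounded_fibers (f := block) (N := threshold + M)
  (P := fun B => trivial_block B \/ ascending_chain_block le B \/
          descending_chain_block le B \/ antichain_block le B)) => [|x].
  exact: block_lt.
case: (ltnP (least_repr x) threshold) => [small_x | large_x].
  by left; apply: small_block.
by right; apply: large_block.
Qed.

End Decomposition.

Theorem corollary5p11 (X : Type) (le : X -> X -> Prop) :
  partial_order le -> unary_FA_presentable le ->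
  exists (k : nat) (part : X -> 'I_k),
    forall i : 'I_k,
      let B := fun x => part x = i in
      trivial_block B \/ ascending_chain_block le B \/
      descending_chain_block le B \/ antichain_block le B.
Proof.
move=> le_po [L [phi [regular_L [phi_onto [regular_eq regular_le]]]]].
have [NL L_periodic] := unary_regular_periodic regular_L.
have [NE eq_shift] := regular_rel_shift_invariant regular_eq.
have [NR le_shift] := regular_rel_shift_invariant regular_le.
pose K := NL + NE + NR.
apply: (@periodic_presentation_decomposition X le L phi K K`!) => //.
- exact: fact_gt0.
- exact: fact_geq.
- by move=> n le_Kn; apply: L_periodic; lia.
- by apply: eq_shift; lia.
- by apply: le_shift; lia.
Qed.
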